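(* For $x\in(0,\pi/2)$, \begin{align*} \cos^{1/3}x&<\left(1-\tfrac8{15}\ln(\cos x)\right)^{-5/8}<\left(\tfrac83-\tfrac53\cos^{1/5}x\right)^{-1}<\exp\left(\tfrac58\cos^{8/15}x-\tfrac58\right)\\ &<\left(\tfrac5{21}\cos^{7/10}x+\tfrac{16}{21}\right)^2<\left(\tfrac13\cos^{4/5}x+\tfrac23\right)^{5/4}<\tfrac5{13}\cos^{13/15}x+\tfrac8{13}\\ &<\left(\tfrac{23}{51}\cos^{34/35}x+\tfrac{28}{51}\right)^{35/46}<\frac{\sin x}{x}<\left(\tfrac7{15}\cos x+\tfrac8{15}\right)^{5/7}<\sqrt{\tfrac59\cos^{6/5}x+\tfrac49}<\frac{2+\cos x}{3}. \end{align*} *)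

From Stdlib Require Import Reals.
Open Scope R_scope.

(* Write c = cos x and u = -ln c > 0. All bounds except sin x / x and (2 + c)/3 are exp (phi u)
   for the power means ((1 - 8/(15q)) c^q + 8/(15q))^(5/(15q-8)), with q -> 0 giving the
   logarithmic bound (h = 1 + 8v/15) and q = 8/15 the exponential one.  Each such phi vanishes
   at 0 and has phi' = -1/(3 h) where h_q(v) = 1 + (8/15)(e^(qv) - 1)/q increases with q, so the
   bounds increase with q; c^(1/3) = exp (-u/3) is the case h = 1.
   Sandwiching sin x / x between q = 34/35 and q = 1 amounts to the monotonicity of
   ln (sin x / x) minus the logarithm of the mean, which vanishes at 0; the derivative
   signs are rational inequalities in sin and cos, each obtained from the previous one by
   differentiation starting from x cos x < sin x.  The final bound is polynomial in c^(1/5). *)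

From Stdlib Require Import Reals Lra.
From Coquelicot Require Import Coquelicot.
Open Scope R_scope.

Lemma lt_of_is_derive_pos (f f' : R -> R) (a b : R) : a < b ->
  (forall t, a <= t <= b -> is_derive f t (f' t)) ->
  (forall t, a < t < b -> 0 < f' t) -> f a < f b.
Proof.
  intros hab hd hpos.
  destruct (MVT_cor2 f f' a b hab) as [c [hfc hc]].
  { intros t ht. apply is_derive_Reals. auto. }
  assert (0 < f' c * (b - a)) by (apply Rmult_lt_0_compat; [apply hpos; auto | lra]).
  lra.
Qed.

Lemma pos_of_is_derive_pos (f f' : R -> R) (x : R) : 0 < x -> f 0 = 0 ->
  (forall t, 0 <= t <= x -> is_derive f t (f' t)) ->
  (forall t, 0 < t < x -> 0 < f' t) -> 0 < f x.
Proof.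
  intros hx hf0 hd hpos. rewrite <- hf0. exact (lt_of_is_derive_pos f f' 0 x hx hd hpos).
Qed.

Lemma sin_cos_first_quadrant (t : R) : 0 < t < PI/2 ->
  0 < sin t /\ 0 < cos t /\ cos t < 1 /\ sin t ^ 2 + cos t ^ 2 = 1.
Proof.
  intros ht. pose proof PI_RGT_0.
  split; [apply sin_gt_0; lra|].
  split; [apply cos_gt_0; lra|].
  split; [rewrite <- cos_0; apply cos_decreasing_1; lra|].
  pose proof (sin2_cos2 t) as e. unfold Rsqr in e. lra.
Qed.

Lemma mul_cos_lt_sin (t : R) : 0 < t < PI/2 -> t * cos t < sin t.
Proof.
  intros ht.
  enough (0 < sin t - t * cos t) by lra.
  apply (pos_of_is_derive_pos (fun w => sin w - w * cos w) (fun w => w * sin w)); try lra.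
  - rewrite sin_0. ring.
  - intros w _. auto_derive; auto; ring.
  - intros w hw. destruct (sin_cos_first_quadrant w) as [? _]; nra.
Qed.

Lemma mul_sin_lt_two_sub_two_cos (t : R) : 0 < t < PI/2 -> t * sin t < 2 - 2 * cos t.
Proof.
  intros ht.
  enough (0 < 2 - 2 * cos t - t * sin t) by lra.
  apply (pos_of_is_derive_pos (fun w => 2 - 2 * cos w - w * sin w)
           (fun w => sin w - w * cos w)); try lra.
  - rewrite sin_0, cos_0. ring.
  - intros w _. auto_derive; auto; ring.
  - intros w hw. pose proof (mul_cos_lt_sin w). lra.
Qed.

Lemma cusa_huygens (t : R) : 0 < t < PI/2 -> 3 * sin t < t * (2 + cos t).
Proof.
  intros ht.
  enough (0 < t * (2 + cos t) - 3 * sin t) by lra.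
  apply (pos_of_is_derive_pos (fun w => w * (2 + cos w) - 3 * sin w)
           (fun w => 2 - 2 * cos w - w * sin w)); try lra.
  - rewrite sin_0. ring.
  - intros w _. auto_derive; auto; ring.
  - intros w hw. pose proof (mul_sin_lt_two_sub_two_cos w). lra.
Qed.

Lemma sin_gt_rational_cos (t : R) : 0 < t < PI/2 ->
  t * (2 * cos t ^ 2 + 8 * cos t + 5) < sin t * (7 * cos t + 8).
Proof.
  intros ht.
  enough (0 < sin t * (7 * cos t + 8) - t * (2 * cos t ^ 2 + 8 * cos t + 5)) by lra.
  apply (pos_of_is_derive_pos
           (fun w => sin w * (7 * cos w + 8) - w * (2 * cos w ^ 2 + 8 * cos w + 5))
           (fun w => 4 * sin w * (w * (2 + cos w) - 3 * sin w))); try lra.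
  - rewrite sin_0. ring.
  - intros w _. auto_derive; auto.
    pose proof (sin2_cos2 w) as e. unfold Rsqr in e. nra.
  - intros w hw. pose proof (cusa_huygens w).
    destruct (sin_cos_first_quadrant w) as [? _]; [lra|].
    apply Rmult_lt_0_compat; lra.
Qed.

Lemma sin_lt_rational_cos (t : R) : 0 < t < PI/2 ->
  sin t * (23 * cos t ^ 2 + 54 * cos t + 28)
  < 3 * t * (2 * cos t ^ 3 + 12 * cos t ^ 2 + 15 * cos t + 6).
Proof.
  intros ht.
  enough (0 < 3 * t * (2 * cos t ^ 3 + 12 * cos t ^ 2 + 15 * cos t + 6)
              - sin t * (23 * cos t ^ 2 + 54 * cos t + 28)) by lra.
  apply (pos_of_is_derive_pos
           (fun w => 3 * w * (2 * cos w ^ 3 + 12 * cos w ^ 2 + 15 * cos w + 6)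
                     - sin w * (23 * cos w ^ 2 + 54 * cos w + 28))
           (fun w => 9 * sin w * (sin w * (7 * cos w + 8)
                                  - w * (2 * cos w ^ 2 + 8 * cos w + 5)))); try lra.
  - rewrite sin_0. ring.
  - intros w _. auto_derive; auto.
    pose proof (sin2_cos2 w) as e. unfold Rsqr in e.
    assert (cos w * (sin w * sin w + cos w * cos w) = cos w) by (rewrite e; ring).
    lra.
  - intros w hw. pose proof (sin_gt_rational_cos w).
    destruct (sin_cos_first_quadrant w) as [? _]; [lra|].
    apply Rmult_lt_0_compat; lra.
Qed.

Lemma one_sub_inv_le_ln (y : R) : 0 < y -> 1 - / y <= ln y.
Proof.
  intros hy.
  pose proof (exp_ineq1_le (ln (/ y))) as h.
  rewrite exp_ln in h by (apply Rinv_0_lt_compat; lra).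
  rewrite ln_Rinv in h by lra. lra.
Qed.

Lemma pos_of_increasing_near_zero (f : R -> R) (K x : R) : 0 < x -> 0 <= K ->
  (forall a b, 0 < a -> a < b -> b <= x -> f a < f b) ->
  (forall a, 0 < a <= 1/2 -> -(K * a ^ 2) <= f a) -> 0 < f x.
Proof.
  intros hx hK hincr hnear.
  enough (0 <= f (x/2)) by (pose proof (hincr (x/2) x); lra).
  destruct (Rle_lt_dec 0 (f (x/2))) as [|hneg]; [assumption|exfalso].
  set (e := - f (x/2)).
  set (a := Rmin (x/2) (Rmin (1/2) (e / (K + 1)))).
  assert (ha : 0 < a <= x/2 /\ a <= 1/2 /\ a * (K + 1) <= e).
  { assert (0 < e / (K + 1)) by (apply Rdiv_lt_0_compat; unfold e; lra).
    assert (e / (K + 1) * (K + 1) = e) by (field; lra).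
    unfold a, Rmin. repeat destruct Rle_dec; repeat split; nra. }
  assert (f a <= f (x/2)).
  { destruct (Req_dec a (x/2)) as [->|]; [lra|left; apply hincr; lra]. }
  pose proof (hnear a ltac:(lra)).
  unfold e in *. nra.
Qed.

(* Summing [d^k + d^(n-k) <= 1 + d^n] over [0 < k < n] and multiplying by [1 - d]. *)
Lemma pow_pairing_ineq (d : R) (n : nat) : 0 <= d <= 1 ->
  d * ((INR n - 1) * d ^ n + (INR n + 1)) <= (INR n + 1) * d ^ n + (INR n - 1).
Proof.
  intros hd.
  set (P k := d * ((INR k - 1) * d ^ k + (INR k + 1)) <= (INR k + 1) * d ^ k + (INR k - 1)).
  enough (forall k, P k /\ P (S k)) by apply H.
  induction k as [|k [IHk IHSk]]; unfold P in *.
  - simpl. lra.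
  - split; [exact IHSk|].
    assert (hpow : d ^ S k <= 1) by (rewrite <- (pow1 (S k)); apply pow_incr; lra).
    assert (0 <= (INR k + 1) * (1 - d) ^ 2 * (1 - d ^ S k)).
    { apply Rmult_le_pos; [apply Rmult_le_pos; [pose proof (pos_INR k); lra | nra] | lra]. }
    rewrite !S_INR. simpl in *. nra.
Qed.

Lemma one_sub_cos_le_sqr (a : R) : 0 < a < PI/2 -> 1 - cos a <= a ^ 2.
Proof.
  intros ha. destruct (sin_cos_first_quadrant a ha) as [hs [hc [hc1 hsc]]].
  pose proof (sin_lt_x a ltac:(lra)). nra.
Qed.

Definition sinc_upper_gap (w : R) : R := 5/7 * ln (7/15 * cos w + 8/15) - ln (sin w) + ln w.

Lemma sinc_upper_gap_increasing (a b : R) :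
  0 < a -> a < b -> b < PI/2 -> sinc_upper_gap a < sinc_upper_gap b.
Proof.
  intros ha hab hb.
  apply (lt_of_is_derive_pos sinc_upper_gap
    (fun w => (sin w * (7 * cos w + 8) - w * (2 * cos w ^ 2 + 8 * cos w + 5))
              / (w * sin w * (7 * cos w + 8)))); [lra| |].
  - intros w hw. destruct (sin_cos_first_quadrant w) as [hs [hc [hc1 hsc]]]; [lra|].
    unfold sinc_upper_gap. auto_derive; [repeat split; lra|].
    field_simplify_eq; [|repeat split; lra].
    assert (w * (sin w ^ 2 + cos w ^ 2) = w) by (rewrite hsc; ring). lra.
  - intros w hw. destruct (sin_cos_first_quadrant w) as [hs [hc _]]; [lra|].
    pose proof (sin_gt_rational_cos w ltac:(lra)).
    apply Rdiv_lt_0_compat; [lra|]. apply Rmult_lt_0_compat; nra.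
Qed.

Lemma sinc_upper_gap_near_zero (a : R) : 0 < a <= 1/2 -> -(5/8 * a ^ 2) <= sinc_upper_gap a.
Proof.
  intros ha. pose proof PI2_1.
  destruct (sin_cos_first_quadrant a) as [hs [hc [hc1 _]]]; [lra|].
  assert (ln (sin a) < ln a) by (apply ln_increasing; [lra|apply sin_lt_x; lra]).
  set (m := 7/15 * cos a + 8/15).
  pose proof (one_sub_inv_le_ln m ltac:(unfold m; lra)).
  pose proof (one_sub_cos_le_sqr a ltac:(lra)).
  assert (hm : / m <= 15/8) by (replace (15/8) with (/ (8/15)) by field; apply Rinv_le_contravar; unfold m; lra).
  assert (1 - / m = -(7/15) * (1 - cos a) * / m) by (unfold m; field; lra).
  assert (0 < / m) by (apply Rinv_0_lt_compat; unfold m; lra).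
  unfold sinc_upper_gap. fold m. nra.
Qed.

Lemma sin_div_lt_upper (x : R) : 0 < x < PI/2 ->
  sin x / x < Rpower (7/15 * cos x + 8/15) (5/7).
Proof.
  intros hx. destruct (sin_cos_first_quadrant x hx) as [hs [hc _]].
  assert (0 < sinc_upper_gap x).
  { apply (pos_of_increasing_near_zero sinc_upper_gap (5/8)); try lra.
    - intros a b ? ? ?. apply sinc_upper_gap_increasing; lra.
    - exact sinc_upper_gap_near_zero. }
  unfold Rpower. rewrite <- (exp_ln (sin x / x)) by (apply Rdiv_lt_0_compat; lra).
  apply exp_increasing. unfold sinc_upper_gap, Rdiv in *.
  rewrite ln_mult, ln_Rinv by (try apply Rinv_0_lt_compat; lra). lra.
Qed.

Lemma Rpower_inv35_le (c : R) : 0 < c < 1 -> Rpower c (1/35) * (17 * c + 18) <= 18 * c + 17.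
Proof.
  intros hc. set (d := Rpower c (1/35)).
  assert (hd : 0 < d < 1).
  { unfold d, Rpower. split; [apply exp_pos|].
    assert (ln c < 0) by (rewrite <- ln_1; apply ln_increasing; lra).
    pose proof (exp_increasing (1/35 * ln c) 0 ltac:(lra)). rewrite exp_0 in *. lra. }
  assert (hcd : d ^ 35 = c).
  { unfold d. rewrite <- Rpower_pow by (unfold Rpower; apply exp_pos).
    rewrite Rpower_mult, INR_IZR_INZ. simpl. replace (1/35 * 35) with 1 by field.
    apply Rpower_1; lra. }
  pose proof (pow_pairing_ineq d 35 ltac:(lra)) as h.
  rewrite hcd, INR_IZR_INZ in h. simpl in h. lra.
Qed.

Definition sinc_lower_gap (w : R) : R :=
  ln (sin w) - ln w - 35/46 * ln (23/51 * Rpower (cos w) (34/35) + 28/51).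

Lemma sinc_lower_gap_derivative_pos (w : R) : 0 < w < PI/2 ->
  0 < cos w / sin w - 1 / w + 17 * sin w / (23 * cos w + 28 * Rpower (cos w) (1/35)).
Proof.
  intros hw. destruct (sin_cos_first_quadrant w hw) as [hs [hc [hc1 hsc]]].
  pose proof (Rpower_inv35_le (cos w) ltac:(lra)) as hroot.
  assert (0 < Rpower (cos w) (1/35)) by (unfold Rpower; apply exp_pos).
  set (c := cos w) in *. set (s := sin w) in *. set (d := Rpower c (1/35)) in *.
  set (A := 23 * c ^ 2 + 54 * c + 28).
  set (B := 2 * c ^ 3 + 12 * c ^ 2 + 15 * c + 6).
  assert (hA : 0 < A) by (unfold A; nra).
  assert (h1 : s * (17 * c + 18) / A <= 17 * s / (23 * c + 28 * d)).
  { rewrite (Rmult_comm 17 s). unfold Rdiv. rewrite !Rmult_assoc.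
    apply Rmult_le_compat_l; [lra|].
    apply (Rmult_le_reg_r (A * (23 * c + 28 * d))); [nra|].
    field_simplify; [|lra|lra]. unfold A. nra. }
  assert (h2 : c / s - 1 / w + s * (17 * c + 18) / A = (3 * w * B - s * A) / (w * s * A)).
  { field_simplify_eq; [|repeat split; lra]. unfold A, B.
    assert (w * (s ^ 2 + c ^ 2) = w) by (rewrite hsc; ring).
    assert (w * c * (s ^ 2 + c ^ 2) = w * c) by (rewrite hsc; ring).
    assert (w * c ^ 2 * (s ^ 2 + c ^ 2) = w * c ^ 2) by (rewrite hsc; ring).
    lra. }
  assert (0 < (3 * w * B - s * A) / (w * s * A)).
  { apply Rdiv_lt_0_compat; [|apply Rmult_lt_0_compat; nra].
    pose proof (sin_lt_rational_cos w hw). unfold A, B. fold c s in H0. lra. }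
  lra.
Qed.

Lemma sinc_lower_gap_increasing (a b : R) :
  0 < a -> a < b -> b < PI/2 -> sinc_lower_gap a < sinc_lower_gap b.
Proof.
  intros ha hab hb.
  apply (lt_of_is_derive_pos sinc_lower_gap
    (fun w => cos w / sin w - 1 / w
              + 17 * sin w / (23 * cos w + 28 * Rpower (cos w) (1/35)))); [lra| |].
  - intros w hw. destruct (sin_cos_first_quadrant w) as [hs [hc _]]; [lra|].
    assert (hsplit : Rpower (cos w) (1/35) * Rpower (cos w) (34/35) = cos w).
    { rewrite <- Rpower_plus. replace (1/35 + 34/35) with 1 by field. apply Rpower_1; lra. }
    pose proof (exp_pos (1/35 * ln (cos w))). pose proof (exp_pos (34/35 * ln (cos w))).
    unfold sinc_lower_gap, Rpower in *. auto_derive; [repeat split; lra|].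
    set (d := exp (1/35 * ln (cos w))) in *. set (E := exp (34/35 * ln (cos w))) in *.
    rewrite <- hsplit. field. repeat split; nra.
  - intros w hw. apply sinc_lower_gap_derivative_pos. lra.
Qed.

Lemma sinc_lower_gap_near_zero (a : R) : 0 < a <= 1/2 -> -(4/3 * a ^ 2) <= sinc_lower_gap a.
Proof.
  intros ha. pose proof PI2_1.
  destruct (sin_cos_first_quadrant a) as [hs [hc [hc1 _]]]; [lra|].
  assert (hsin : ln (cos a) + ln a < ln (sin a)).
  { rewrite <- ln_mult by lra. apply ln_increasing; [nra|].
    rewrite Rmult_comm. apply mul_cos_lt_sin. lra. }
  assert (hE : 0 < Rpower (cos a) (34/35) < 1).
  { unfold Rpower. split; [apply exp_pos|].
    assert (ln (cos a) < 0) by (rewrite <- ln_1; apply ln_increasing; lra).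
    pose proof (exp_increasing (34/35 * ln (cos a)) 0 ltac:(lra)). rewrite exp_0 in *. lra. }
  assert (ln (23/51 * Rpower (cos a) (34/35) + 28/51) < 0)
    by (rewrite <- ln_1; apply ln_increasing; lra).
  pose proof (one_sub_inv_le_ln (cos a) hc).
  pose proof (one_sub_cos_le_sqr a ltac:(lra)).
  assert (/ cos a <= 4/3) by (replace (4/3) with (/ (3/4)) by field; apply Rinv_le_contravar; nra).
  assert (1 - / cos a = -(1 - cos a) * / cos a) by (field; lra).
  assert (0 < / cos a) by (apply Rinv_0_lt_compat; lra).
  unfold sinc_lower_gap. nra.
Qed.

Lemma sin_div_gt_lower (x : R) : 0 < x < PI/2 ->
  Rpower (23/51 * Rpower (cos x) (34/35) + 28/51) (35/46) < sin x / x.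
Proof.
  intros hx. destruct (sin_cos_first_quadrant x hx) as [hs [hc _]].
  assert (0 < sinc_lower_gap x).
  { apply (pos_of_increasing_near_zero sinc_lower_gap (4/3)); try lra.
    - intros a b ? ? ?. apply sinc_lower_gap_increasing; lra.
    - exact sinc_lower_gap_near_zero. }
  unfold Rpower at 1. rewrite <- (exp_ln (sin x / x)) by (apply Rdiv_lt_0_compat; lra).
  apply exp_increasing. unfold sinc_lower_gap, Rdiv in *.
  rewrite ln_mult, ln_Rinv by (try apply Rinv_0_lt_compat; lra). lra.
Qed.

Definition rate (q v : R) : R := 1 + 8/15 * (exp (q * v) - 1) / q.

Definition phi (q v : R) : R :=
  5 / (15 * q - 8) * ln ((1 - 8 / (15 * q)) * exp (-(q * v)) + 8 / (15 * q)).

Definition phi_log (v : R) : R := -(5/8) * ln (1 + 8/15 * v).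

Definition phi_exp (v : R) : R := 5/8 * exp (-(8/15 * v)) - 5/8.

Lemma rate_ge1 (q v : R) : 0 < q -> 0 <= v -> 1 <= rate q v.
Proof.
  intros hq hv. unfold rate.
  pose proof (exp_ineq1_le (q * v)).
  assert (0 <= 8/15 * (exp (q * v) - 1) / q).
  { apply Rmult_le_pos; [nra|left; apply Rinv_0_lt_compat; lra]. }
  lra.
Qed.

Lemma linear_lt_rate (q v : R) : 0 < q -> 0 < v -> 1 + 8/15 * v < rate q v.
Proof.
  intros hq hv. unfold rate.
  pose proof (exp_ineq1 (q * v) ltac:(nra)).
  assert (v < (exp (q * v) - 1) / q).
  { apply (Rmult_lt_reg_r q); [lra|]. unfold Rdiv. rewrite Rmult_assoc, Rinv_l; lra. }
  unfold Rdiv in *. lra.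
Qed.

Lemma rate_lt_rate (p q v : R) : 0 < p -> p < q -> 0 < v -> rate p v < rate q v.
Proof.
  intros hp hpq hv.
  assert (0 < (exp (q * v) - 1) / q - (exp (p * v) - 1) / p).
  { apply (pos_of_is_derive_pos (fun w => (exp (q * w) - 1) / q - (exp (p * w) - 1) / p)
             (fun w => exp (q * w) - exp (p * w))); [lra| | |].
    - rewrite !Rmult_0_r, exp_0. field. lra.
    - intros t _. auto_derive; auto. field. lra.
    - intros t ht. pose proof (exp_increasing (p * t) (q * t) ltac:(nra)). lra. }
  unfold rate, Rdiv in *. lra.
Qed.

Lemma is_derive_phi (q v : R) : 0 < q -> 15 * q - 8 <> 0 -> 0 <= v ->
  is_derive (phi q) v (-(1/3) / rate q v).
Proof.
  intros hq hq8 hv.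
  assert (harg : (1 - 8 / (15 * q)) * exp (-(q * v)) + 8 / (15 * q)
                 = rate q v * exp (-(q * v))).
  { unfold rate. rewrite exp_Ropp. field. split; [apply Rgt_not_eq, exp_pos|lra]. }
  pose proof (rate_ge1 q v hq hv). pose proof (exp_pos (-(q * v))).
  unfold phi. auto_derive; [rewrite harg; nra|].
  rewrite harg. unfold rate in *. rewrite exp_Ropp. field.
  pose proof (exp_ineq1_le (q * v)). repeat split; nra.
Qed.

Lemma is_derive_phi_log (v : R) : 0 <= v -> is_derive phi_log v (-(1/3) / (1 + 8/15 * v)).
Proof. intros hv. unfold phi_log. auto_derive; [lra|]. field. lra. Qed.

Lemma is_derive_phi_exp (v : R) : 0 <= v -> is_derive phi_exp v (-(1/3) / rate (8/15) v).
Proof.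
  intros hv. pose proof (exp_pos (8/15 * v)).
  unfold phi_exp, rate. auto_derive; [auto|]. rewrite exp_Ropp. field. lra.
Qed.

Lemma phi_at_0 (q : R) : 0 < q -> phi q 0 = 0.
Proof.
  intros hq. unfold phi. rewrite Rmult_0_r, Ropp_0, exp_0.
  replace ((1 - 8 / (15 * q)) * 1 + 8 / (15 * q)) with 1 by (field; lra).
  rewrite ln_1. ring.
Qed.

Lemma lt_of_rate_lt (f g hf hg : R -> R) (u : R) : 0 < u -> f 0 = 0 -> g 0 = 0 ->
  (forall v, 0 <= v -> is_derive f v (-(1/3) / hf v)) ->
  (forall v, 0 <= v -> is_derive g v (-(1/3) / hg v)) ->
  (forall v, 0 < v -> 0 < hf v < hg v) -> f u < g u.
Proof.
  intros hu hf0 hg0 hdf hdg hlt.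
  enough (0 < g u - f u) by lra.
  apply (pos_of_is_derive_pos (fun w => g w - f w) (fun w => -(1/3) / hg w - -(1/3) / hf w)).
  - exact hu.
  - rewrite hf0, hg0. ring.
  - intros t ht. apply (is_derive_minus g f); [apply hdg|apply hdf]; lra.
  - intros t ht. destruct (hlt t ltac:(lra)).
    assert (/ hg t < / hf t) by (apply Rinv_lt_contravar; nra).
    unfold Rdiv. lra.
Qed.

Lemma phi_lt_phi (p q u : R) : 0 < p -> p < q -> 15 * p - 8 <> 0 -> 15 * q - 8 <> 0 -> 0 < u ->
  phi p u < phi q u.
Proof.
  intros hp hpq hp8 hq8 hu.
  apply (lt_of_rate_lt _ _ (rate p) (rate q)); try (apply phi_at_0); try lra.
  - intros v hv. apply is_derive_phi; lra.
  - intros v hv. apply is_derive_phi; lra.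
  - intros v hv. pose proof (rate_ge1 p v hp). pose proof (rate_lt_rate p q v). lra.
Qed.

Lemma exponent_chain (u : R) : 0 < u ->
  -(u/3) < phi_log u /\ phi_log u < phi (1/5) u /\ phi (1/5) u < phi_exp u /\
  phi_exp u < phi (7/10) u /\ phi (7/10) u < phi (4/5) u /\
  phi (4/5) u < phi (13/15) u /\ phi (13/15) u < phi (34/35) u /\
  phi 1 u < phi (6/5) u.
Proof.
  intros hu.
  assert (hlog0 : phi_log 0 = 0) by (unfold phi_log; rewrite Rmult_0_r, Rplus_0_r, ln_1; ring).
  assert (hexp0 : phi_exp 0 = 0) by (unfold phi_exp; rewrite Rmult_0_r, Ropp_0, exp_0; ring).
  assert (hphi0 : phi (1/5) 0 = 0) by (apply phi_at_0; lra).
  assert (hphi : forall v, 0 <= v -> is_derive (phi (1/5)) v (-(1/3) / rate (1/5) v))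
    by (intros; apply is_derive_phi; lra).
  repeat split; try (apply phi_lt_phi; lra).
  - apply (lt_of_rate_lt (fun v => -(v/3)) phi_log (fun _ => 1) (fun v => 1 + 8/15 * v) u hu
             ltac:(lra) hlog0);
      [intros v _; auto_derive; auto; field | exact is_derive_phi_log | intros; lra].
  - apply (lt_of_rate_lt _ _ _ _ u hu hlog0 hphi0 is_derive_phi_log hphi).
    intros v hv. pose proof (linear_lt_rate (1/5) v). lra.
  - apply (lt_of_rate_lt _ _ _ _ u hu hphi0 hexp0 hphi is_derive_phi_exp).
    intros v hv. pose proof (rate_ge1 (1/5) v). pose proof (rate_lt_rate (1/5) (8/15) v). lra.
  - apply (lt_of_rate_lt _ _ _ (rate (7/10)) u hu hexp0 (phi_at_0 (7/10) ltac:(lra))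
             is_derive_phi_exp); [intros; apply is_derive_phi; lra|].
    intros v hv. pose proof (rate_ge1 (8/15) v). pose proof (rate_lt_rate (8/15) (7/10) v). lra.
Qed.

Lemma exp_phi_neg_ln (q a b e c : R) : 0 < q -> 0 < c ->
  1 - 8 / (15 * q) = a -> 8 / (15 * q) = b -> 5 / (15 * q - 8) = e ->
  exp (phi q (- ln c)) = Rpower (a * Rpower c q + b) e.
Proof.
  intros hq hc <- <- <-. unfold phi, Rpower.
  replace (-(q * - ln c)) with (q * ln c) by ring. reflexivity.
Qed.

Lemma sqrt_lt_third_mean (r : R) : 0 < r < 1 -> sqrt (5/9 * r ^ 6 + 4/9) < (2 + r ^ 5) / 3.
Proof.
  intros hr.
  assert (h5 : 0 < r ^ 5) by (apply pow_lt; lra).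
  assert (h6 : 0 < r ^ 6) by (apply pow_lt; lra).
  rewrite <- (sqrt_pow2 ((2 + r ^ 5) / 3)) by lra.
  apply sqrt_lt_1_alt. split; [lra|].
  assert (0 < r ^ 5 * ((1 - r) ^ 2 * (r ^ 3 + 2 * r ^ 2 + 3 * r + 4))).
  { apply Rmult_lt_0_compat; [lra|]. apply Rmult_lt_0_compat; nra. }
  nra.
Qed.

Lemma cos_power_chain (c : R) : 0 < c < 1 ->
  Rpower c (1/3) < Rpower (1 - 8/15 * ln c) (-(5/8)) /\
  Rpower (1 - 8/15 * ln c) (-(5/8)) < / (8/3 - 5/3 * Rpower c (1/5)) /\
  / (8/3 - 5/3 * Rpower c (1/5)) < exp (5/8 * Rpower c (8/15) - 5/8) /\
  exp (5/8 * Rpower c (8/15) - 5/8) < (5/21 * Rpower c (7/10) + 16/21) ^ 2 /\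
  (5/21 * Rpower c (7/10) + 16/21) ^ 2 < Rpower (1/3 * Rpower c (4/5) + 2/3) (5/4) /\
  Rpower (1/3 * Rpower c (4/5) + 2/3) (5/4) < 5/13 * Rpower c (13/15) + 8/13 /\
  5/13 * Rpower c (13/15) + 8/13 < Rpower (23/51 * Rpower c (34/35) + 28/51) (35/46) /\
  Rpower (7/15 * c + 8/15) (5/7) < sqrt (5/9 * Rpower c (6/5) + 4/9) /\
  sqrt (5/9 * Rpower c (6/5) + 4/9) < (2 + c) / 3.
Proof.
  intros hc.
  set (u := - ln c).
  assert (hu : 0 < u) by (pose proof (ln_increasing c 1); rewrite ln_1 in *; unfold u; lra).
  assert (hpos : forall q, 0 < Rpower c q) by (intros; apply exp_pos).
  assert (hlt1 : forall q, 0 < q -> Rpower c q < 1).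
  { intros q hq. unfold Rpower. rewrite <- exp_0. apply exp_increasing.
    unfold u in hu. nra. }
  assert (e1 : Rpower c (1/3) = exp (-(u/3))) by (unfold Rpower, u; f_equal; field).
  assert (e2 : Rpower (1 - 8/15 * ln c) (-(5/8)) = exp (phi_log u))
    by (unfold Rpower, phi_log, u; do 3 f_equal; ring).
  assert (e3 : / (8/3 - 5/3 * Rpower c (1/5)) = exp (phi (1/5) u)).
  { unfold u; rewrite (exp_phi_neg_ln (1/5) (-(5/3)) (8/3) (- (1))) by (lra || field).
    pose proof (hlt1 (1/5) ltac:(lra)).
    rewrite Rpower_Ropp, Rpower_1 by lra. f_equal. ring. }
  assert (e4 : exp (5/8 * Rpower c (8/15) - 5/8) = exp (phi_exp u))
    by (unfold phi_exp, Rpower, u; do 4 f_equal; ring).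
  assert (e5 : (5/21 * Rpower c (7/10) + 16/21) ^ 2 = exp (phi (7/10) u)).
  { unfold u; rewrite (exp_phi_neg_ln (7/10) (5/21) (16/21) (INR 2)) by (simpl; lra || field).
    rewrite Rpower_pow; [reflexivity|]. specialize (hpos (7/10)). lra. }
  assert (e6 : Rpower (1/3 * Rpower c (4/5) + 2/3) (5/4) = exp (phi (4/5) u))
    by (unfold u; rewrite (exp_phi_neg_ln (4/5) (1/3) (2/3) (5/4)) by (lra || field); reflexivity).
  assert (e7 : 5/13 * Rpower c (13/15) + 8/13 = exp (phi (13/15) u)).
  { unfold u; rewrite (exp_phi_neg_ln (13/15) (5/13) (8/13) 1) by (lra || field).
    rewrite Rpower_1; [reflexivity|]. specialize (hpos (13/15)). lra. }
  assert (e8 : Rpower (23/51 * Rpower c (34/35) + 28/51) (35/46) = exp (phi (34/35) u))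
    by (unfold u; rewrite (exp_phi_neg_ln (34/35) (23/51) (28/51) (35/46)) by (lra || field); reflexivity).
  assert (e10 : Rpower (7/15 * c + 8/15) (5/7) = exp (phi 1 u))
    by (unfold u; rewrite (exp_phi_neg_ln 1 (7/15) (8/15) (5/7)), Rpower_1 by (lra || field); reflexivity).
  assert (e11 : sqrt (5/9 * Rpower c (6/5) + 4/9) = exp (phi (6/5) u)).
  { unfold u; rewrite (exp_phi_neg_ln (6/5) (5/9) (4/9) (/2)) by (lra || field).
    rewrite Rpower_sqrt; [reflexivity|]. specialize (hpos (6/5)). lra. }
  assert (last : sqrt (5/9 * Rpower c (6/5) + 4/9) < (2 + c) / 3).
  { assert (hr : Rpower c (6/5) = Rpower c (1/5) ^ 6 /\ c = Rpower c (1/5) ^ 5).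
    { rewrite <- !Rpower_pow, !Rpower_mult by apply hpos. simpl.
      split; [f_equal; field|]. replace (1/5 * (1+1+1+1+1)) with 1 by field. rewrite Rpower_1; lra. }
    destruct hr as [-> hc5]. rewrite hc5 at 2. apply sqrt_lt_third_mean.
    split; [apply hpos|apply hlt1; lra]. }
  rewrite e1, e2, e3, e4, e5, e6, e7, e8, e10, e11 in *.
  destruct (exponent_chain u hu) as [h1 [h2 [h3 [h4 [h5 [h6 [h7 h10]]]]]]].
  repeat split; try exact last; apply exp_increasing; assumption.
Qed.

Theorem corollary9 (x : R) (hx0 : 0 < x) (hx1 : x < PI / 2) :
  let c := cos x in
  Rpower c (1/3) < Rpower (1 - 8/15 * ln c) (-(5/8)) /\
  Rpower (1 - 8/15 * ln c) (-(5/8)) < / (8/3 - 5/3 * Rpower c (1/5)) /\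
  / (8/3 - 5/3 * Rpower c (1/5)) < exp (5/8 * Rpower c (8/15) - 5/8) /\
  exp (5/8 * Rpower c (8/15) - 5/8) < (5/21 * Rpower c (7/10) + 16/21) ^ 2 /\
  (5/21 * Rpower c (7/10) + 16/21) ^ 2 < Rpower (1/3 * Rpower c (4/5) + 2/3) (5/4) /\
  Rpower (1/3 * Rpower c (4/5) + 2/3) (5/4) < 5/13 * Rpower c (13/15) + 8/13 /\
  5/13 * Rpower c (13/15) + 8/13 < Rpower (23/51 * Rpower c (34/35) + 28/51) (35/46) /\
  Rpower (23/51 * Rpower c (34/35) + 28/51) (35/46) < sin x / x /\
  sin x / x < Rpower (7/15 * c + 8/15) (5/7) /\
  Rpower (7/15 * c + 8/15) (5/7) < sqrt (5/9 * Rpower c (6/5) + 4/9) /\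
  sqrt (5/9 * Rpower c (6/5) + 4/9) < (2 + c) / 3.
Proof.
  cbv zeta.
  assert (hx : 0 < x < PI/2) by lra.
  destruct (sin_cos_first_quadrant x hx) as [_ [hc [hc1 _]]].
  destruct (cos_power_chain (cos x) (conj hc hc1))
    as (h1 & h2 & h3 & h4 & h5 & h6 & h7 & h10 & h11).
  pose proof (sin_div_gt_lower x hx). pose proof (sin_div_lt_upper x hx).
  repeat split; assumption.
Qed.
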